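(* If $X$ is a finite quasi-metric space, then the Euler characteristic of its realized magnitude nerve is equal to the alternating sum of the ranks of its magnitude homology groups: \[ \chi(B(\Sigma X,\mathbb{1}))= \sum_n (-1)^n \,\mathrm{rk}\, \mathit{HM}_n(X), \] the infinite sum converging in the topology of $\mathbb{Q}(\!(q^\mathbb{R})\!)$.
   Context: A quasi-metric space is a skeletal $[0,\infty)$-enriched category (distances may be asymmetric, $d(x,y)>0$ for $x\ne y$). Let $\mathbf{A}=\prod_\mathbb{R}\mathrm{Ab}$ be $\mathbb{R}$-graded abelian groups with convolution tensor product $(A\otimes B)_\ell=\bigoplus_{j+k=\ell}A_j\otimes B_k$, and $\mathbf{W}=\mathrm{Ch}_\mathbf{A}$. Define $\Sigma:[0,\infty)\to\mathbf{W}$ by $\Sigma(\ell)=\mathbb{Z}$ in chain degree 0 and grading $\ell$, and $0$ elsewhere. $\mathbb{Q}(\!(q^\mathbb{R})\!)$ is the field of Hahn series $\sum_\ell a_\ell q^\ell$ ($a_\ell\in\mathbb{Q}$, well-ordered support), with the valuation topology (a series of Hahn series converges iff the smallest exponents of its terms tend to $\infty$). The Euler characteristic $\chi$ of a (Hahn finite) object of $\mathbf{W}$ is the Hahn series whose $q^\ell$-coefficient is the usual Euler characteristic of the grading-$\ell$ part; the rank of an $\mathbb{R}$-graded abelian group is likewise the Hahn series of the ranks of its graded pieces. The realized magnitude nerve $B(\Sigma X,\mathbb{1})$ is (after normalization) the chain complex whose $n$-chains in grading $\ell$ are freely generated by tuples $(x_0,\dots,x_n)$ with $x_i\neq x_{i+1}$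 and $d(x_0,x_1)+\cdots+d(x_{n-1},x_n)=\ell$, with boundary the alternating sum of the face maps $d^i$, where $d^i$ deletes $x_i$ if this does not change the total distance and is $0$ otherwise. Magnitude homology $\mathit{HM}_n(X)=\{\mathit{HM}^\ell_n(X)\}_{\ell\in\mathbb{R}}$ is the homology of this complex. *)

From HB Require Import structures.
From mathcomp Require Import all_boot all_order all_algebra.
From mathcomp Require Import boolp classical_sets fsbigop reals.
Set Implicit Arguments. Unset Strict Implicit. Unset Printing Implicit Defensive.
Import Order.TTheory GRing.Theory Num.Theory.
Local Open Scope ring_scope.

Section Magnitude.
Variables (R : realType) (T : finType) (d : T -> T -> R).

(* A (finite) quasi-metric space: skeletal [0,oo)-enriched category. *)
Definition quasi_metric : Prop :=
  [/\ forall x, d x x = 0,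
      forall x y, 0 <= d x y,
      forall x y, x != y -> 0 < d x y
    & forall x y z, d x z <= d x y + d y z].

Definition tlen (s : seq T) : R :=
  \sum_(p <- zip s (behead s)) d p.1 p.2.

(* generator of the normalized magnitude nerve in chain degree n,
   grading l : (x0,...,xn) with x_i != x_{i+1} and length l *)
Definition gen (n : nat) (l : R) (s : seq T) : bool :=
  [&& size s == n.+1, all (fun p => p.1 != p.2) (zip s (behead s))
    & tlen s == l].

Definition rem_at (i : nat) (s : seq T) : seq T := take i s ++ drop i.+1 s.

(* coefficient of the generator s in the face d^i t: d^i deletes x_i if this
   does not change the total distance, and is 0 otherwise *)
Definition face_coef (i : nat) (t s : seq T) : int :=
  if (rem_at i t == s) && (tlen (rem_at i t) == tlen t) then 1 else 0.

(* chains: integer coefficient functions on tuples (finite support in the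
   relevant generators is imposed separately) *)
Definition chain := seq T -> int.

(* boundary from chain degree n.+1 to chain degree n *)
Definition bd (n : nat) (c : chain) : chain := fun s =>
  \sum_(t : (n.+2).-tuple T)
     c (val t) * \sum_(i < n.+2) ((-1) ^+ i * face_coef i (val t) s).

Definition supported (n : nat) (l : R) (c : chain) : Prop :=
  forall s, c s != 0 -> gen n l s.

Definition is_cycle (n : nat) (l : R) (c : chain) : Prop :=
  supported n l c /\
  match n with 0 => True | m.+1 => forall s, bd m c s = 0 end.

Definition is_boundary (n : nat) (l : R) (c : chain) : Prop :=
  exists b : chain, supported n.+1 l b /\ forall s, c s = bd n b s.

(* a family of k elements of HM_n^l (given by representing cycles) that is
   linearly independent over Z in HM_n^l = cycles / boundaries *)
Definition HM_indep (n : nat) (l : R) (k : nat) : Prop :=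
  exists v : 'I_k -> chain,
    (forall i, is_cycle n l (v i)) /\
    forall a : 'I_k -> int,
      is_boundary n l (fun s => \sum_(i < k) a i * v i s) ->
      forall i, a i = 0.

(* rank of the abelian group HM_n^l(X) = maximal size of a Z-linearly
   independent family; it is bounded by the rank #|T|^(n+1) of the free
   group of n-tuples, so the bounded max below is the actual rank. *)
Definition rkHM (n : nat) (l : R) : nat :=
  \max_(k < (#|T| ^ n.+1).+1 | `[< HM_indep n l k >]) k.

Definition rkC (n : nat) (l : R) : nat :=
  #|[set t : (n.+1).-tuple T | gen n l (val t)]|.

(* Hahn series in Q((q^R)) are represented by their coefficient functions
   l |-> a_l. *)
Definition hahn := R -> rat.

(* Euler characteristic of the realized magnitude nerve B(Sigma X, 1):
   coefficient of q^l is the (finite) alternating sum of the ranks of the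
   grading-l chain groups. *)
Definition chi_nerve : hahn := fun l =>
  (\sum_(n \in [set: nat]) ((-1) ^+ n * (rkC n l)%:Q))%R.

Definition rk_HM_series (n : nat) : hahn := fun l => (rkHM n l)%:Q.

End Magnitude.

(* Convergence of a series sum_n f n of Hahn series to s in the valuation
   topology: the valuation of s - (partial sum) tends to +oo, i.e. for every
   bound L the partial sums eventually agree with s on all exponents < L. *)
Definition hahn_series_converges_to (R : realType)
    (f : nat -> hahn R) (s : hahn R) : Prop :=
  forall L : R, exists N : nat, forall M : nat, (N <= M)%N ->
    forall l : R, l < L -> \sum_(n < M) f n l = s l.

From HB Require Import structures.
From mathcomp Require Import all_boot all_order all_algebra.
From mathcomp Require Import boolp classical_sets fsbigop reals.
From mathcomp Require Import ring.
Import Order.TTheory GRing.Theory Num.Theory.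
Local Open Scope ring_scope.
Set Implicit Arguments. Unset Strict Implicit. Unset Printing Implicit Defensive.

(* For a fixed grading [l] the normalized nerve is a finite complex of free
   abelian groups, based on the generators of length [l].  Over [Q] its
   boundary maps become rational matrices whose composite vanishes by the
   simplicial identities (a face that shortens a tuple is zero, and by the
   triangle inequality faces never lengthen it).  Clearing denominators moves
   independence modulo boundaries between [Z] and [Q], so the rank of
   [HM_n^l] is the dimension of rational homology, and rank-nullity telescopes
   to the Euler identity in grading [l].  Nonzero distances of a finite space
   are at least some [delta > 0], so for [l < L] there are no generators in
   degrees beyond [L / delta]: the partial sums agree with [chi] below [L]
   from that degree on. *)

Section Faces.
Variable T : finType.
Implicit Types (x : T) (s t : seq T).

Lemma rem_at0 x s : rem_at 0 (x :: s) = s.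
Proof. by rewrite /rem_at /= drop0. Qed.

Lemma rem_atS i x s : rem_at i.+1 (x :: s) = x :: rem_at i s.
Proof. by []. Qed.

Lemma size_rem_at i s : (i < size s)%N -> size (rem_at i s) = (size s).-1.
Proof.
elim: s i => [|x s IH] [|i] //; first by rewrite rem_at0.
by move=> lt_is; rewrite rem_atS /= IH //; case: s {IH} lt_is.
Qed.

Lemma rem_at_rem_at p q s : (p <= q)%N ->
  rem_at q (rem_at p s) = rem_at p (rem_at q.+1 s).
Proof.
elim: s p q => [|x s IH] [|p] [|q] //= le_pq; rewrite ?rem_at0 ?rem_atS //.
by rewrite IH.
Qed.

(* By [rem_at_rem_at], the terms with [q < p] cancel those with [p <= q]. *)
Lemma alternating_rem_at_sum_eq0 (V : pzRingType) (H : seq T -> V) K t :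
  \sum_(p < K.+1) \sum_(q < K) (-1) ^+ (p + q) * H (rem_at q (rem_at p t)) = 0.
Proof.
set F := fun p q : nat => (-1) ^+ (p + q) * H (rem_at q (rem_at p t)).
have -> : \sum_(p < K.+1) \sum_(q < K) F p q =
   \sum_(p < K.+1) \sum_(q < K) (if (p <= q)%N then F p q else 0)
 + \sum_(p < K.+1) \sum_(q < K) (if (q < p)%N then F p q else 0).
  rewrite -big_split /=; apply: eq_bigr => p _; rewrite -big_split /=.
  by apply: eq_bigr => q _; case: leqP => _; rewrite ?addr0 ?add0r.
rewrite big_ord_recr /= [X in _ + X + _]big1 ?addr0; last first.
  by move=> q _; rewrite leqNgt ltn_ord.
rewrite [X in _ + X]exchange_big /=.
have -> : \sum_(q < K) \sum_(p < K.+1) (if (q < p)%N then F p q else 0) =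
          - \sum_(q < K) \sum_(p < K) (if (q <= p)%N then F q p else 0).
  rewrite -sumrN; apply: eq_bigr => q _; rewrite big_ord_recl /= add0r -sumrN.
  apply: eq_bigr => p _; rewrite /bump /= add1n ltnS.
  case: leqP => le_qp /=; last by rewrite oppr0.
  by rewrite /F -rem_at_rem_at // addSn exprS mulN1r mulNr addnC.
by rewrite subrr.
Qed.

End Faces.

Lemma common_denominator_mx m k (A : 'M[rat]_(m, k)) :
  exists2 N : nat, (0 < N)%N & forall i j, N%:R * A i j \is a Num.int.
Proof.
exists (\prod_(ij : 'I_m * 'I_k) `|denq (A ij.1 ij.2)|%N).
  by apply: prodn_gt0 => ij; rewrite absz_gt0 denq_neq0.
move=> i j; rewrite (bigD1 (i, j)) //= natrM mulrAC.
rewrite rpredM ?natr_int // natr_absz ger0_norm ?ltW ?denq_gt0 //.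
by rewrite mulrC -numqE intr_int.
Qed.

(* [h], [c], [z] are the ranks of homology, chains and cycles; [b n] is the
   rank of the boundaries coming from degree [n.+1]. *)
Lemma euler_char_telescope (h c z b : nat -> nat) :
  (forall n, h n + b n = z n)%N -> c 0%N = z 0%N ->
  (forall n, c n.+1 = z n.+1 + b n)%N -> forall M,
  \sum_(n < M.+1) (-1) ^+ n * (h n)%:R + (-1) ^+ M * (b M)%:R =
  \sum_(n < M.+1) (-1) ^+ n * (c n)%:R :> rat.
Proof.
move=> hbz c0 cS; elim=> [|M IH].
  by rewrite !big_ord1 !expr0 !mul1r -natrD hbz c0.
rewrite big_ord_recr [RHS]big_ord_recr /= -IH cS -(hbz M.+1) !natrD exprS.
ring.
Qed.

Section QuasiMetric.
Variables (R : realType) (T : finType) (d : T -> T -> R).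
Hypothesis qm : quasi_metric d.
Implicit Types (x y z : T) (s t : seq T).

Definition stutter_free s := all (fun p => p.1 != p.2) (zip s (behead s)).

Lemma stutter_free_cons2 x y s :
  stutter_free [:: x, y & s] = (x != y) && stutter_free (y :: s).
Proof. by []. Qed.

Lemma tlen_nil : tlen d [::] = 0.
Proof. by rewrite /tlen big_nil. Qed.

Lemma tlen1 x : tlen d [:: x] = 0.
Proof. by rewrite /tlen /= big_nil. Qed.

Lemma tlen_cons2 x y s : tlen d [:: x, y & s] = d x y + tlen d (y :: s).
Proof. by rewrite /tlen /= big_cons. Qed.

Lemma tlen_cons x s :
  tlen d (x :: s) = (if s is y :: _ then d x y else 0) + tlen d s.
Proof. by case: s => [|y s]; rewrite ?tlen1 ?tlen_nil ?addr0 ?tlen_cons2. Qed.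

Lemma dist_ge0 x y : 0 <= d x y.
Proof. by case: qm. Qed.

Lemma dist_gt0 x y : x != y -> 0 < d x y.
Proof. by case: qm => _ _ + _; apply. Qed.

Lemma tlen_rem_at_le i s : tlen d (rem_at i s) <= tlen d s.
Proof.
elim: s i => [|x s IH] [|i]; rewrite ?rem_at0 ?rem_atS //.
  by rewrite tlen_cons lerDr; case: s {IH} => // y s; apply: dist_ge0.
rewrite !tlen_cons; case: i => [|i].
  case: s IH => [|y s] IH; rewrite ?rem_at0 //.
  rewrite tlen_cons addrA lerD2r.
  case: s {IH} => [|z s]; first by rewrite addr0 dist_ge0.
  by case: qm.
case: s IH => [|y s] IH; rewrite ?rem_atS //.
by rewrite lerD2l -(rem_atS i y s) IH.
Qed.

(* Deleting [y] from [x, y, x] lowers the length by [d x y + d y x > 0]. *)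
Lemma stutter_free_rem_at i s : stutter_free s ->
  tlen d (rem_at i s) = tlen d s -> stutter_free (rem_at i s).
Proof.
elim: s i => [|x s IH] [|i]; rewrite ?rem_at0 ?rem_atS //.
  by case: s {IH} => // y s /andP[].
case: s IH => [|y s] IH //; rewrite stutter_free_cons2 => /andP[xy sf_ys].
case: i => [|i].
  rewrite rem_at0; case: s sf_ys {IH} => [|z s] //.
  rewrite stutter_free_cons2 => /andP[_ sf_zs]; rewrite !tlen_cons2 => len_eq.
  rewrite stutter_free_cons2 sf_zs andbT; apply/negP => /eqP xz; subst z.
  move: len_eq; have [-> _ _ _] := qm; rewrite addrA => /addIr /esym /eqP.
  by rewrite paddr_eq0 ?dist_ge0 // (negbTE (lt0r_neq0 (dist_gt0 xy))).
rewrite rem_atS !tlen_cons2 => /addrI len_eq.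
by rewrite stutter_free_cons2 xy /= -rem_atS IH.
Qed.

Lemma gen_face n l i t s : (i < n.+2)%N -> gen d n.+1 l t ->
  face_coef d i t s != 0 -> gen d n l s.
Proof.
move=> lt_i /and3P[/eqP size_t sf_t /eqP len_t]; rewrite /face_coef.
case: ifP => // /andP[/eqP <- /eqP len_eq] _.
rewrite /gen size_rem_at ?size_t // eqxx len_eq len_t eqxx andbT.
exact: stutter_free_rem_at.
Qed.

Lemma exists_min_dist : exists2 delta : R, 0 < delta &
  forall x y, x != y -> delta <= d x y.
Proof.
exists (\big[Num.min/1]_(p : T * T | p.1 != p.2) d p.1 p.2).
  by apply: lt_bigmin => // p /dist_gt0.
by move=> x y xy; rewrite (bigmin_le_cond _ (j := (x, y))).
Qed.

Lemma tlen_ge_steps delta : (forall x y, x != y -> delta <= d x y) ->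
  forall s, stutter_free s -> ((size s).-1)%:R * delta <= tlen d s.
Proof.
move=> delta_le; elim=> [|x [|y s] IH]; rewrite ?mul0r ?tlen_nil ?tlen1 //.
rewrite stutter_free_cons2 tlen_cons2 => /andP[xy sf_ys] /=.
by rewrite -addn1 natrD mulrDl mul1r addrC lerD ?delta_le ?IH.
Qed.

Lemma gen_large_degree L : exists N, forall n l s,
  (N <= n)%N -> l < L -> ~~ gen d n l s.
Proof.
have [delta delta_gt0 delta_le] := exists_min_dist.
pose N := Num.Def.archi_bound (`|L| / delta).
have ltN : `|L| / delta < N%:R.
  by apply: archi_boundP; rewrite divr_ge0 ?normr_ge0 ?ltW.
exists N => n l s le_Nn lt_lL.
apply/negP => /and3P[/eqP size_s sf_s /eqP len_s].
have := tlen_ge_steps delta_le sf_s; rewrite size_s len_s /= => le_nl.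
suff : n%:R * delta < n%:R * delta by rewrite ltxx.
apply: (le_lt_trans le_nl); apply: (lt_le_trans lt_lL).
apply: (le_trans (ler_norm L)); rewrite -ler_pdivrMr //.
by apply: (ltW (lt_le_trans ltN _)); rewrite ler_nat.
Qed.

Definition lincomb k (a : 'I_k -> int) (v : 'I_k -> chain T) : chain T :=
  fun s => \sum_(i < k) a i * v i s.

Section Grading.
Variable l : R.

Definition gens n : seq (seq T) :=
  [seq val u | u <- enum [set u : (n.+1).-tuple T | gen d n l (val u)]].

Definition ngens n := size (gens n).

Definition gen_at n (i : 'I_(ngens n)) : seq T := nth [::] (gens n) i.

Lemma rkC_ngens n : rkC d n l = ngens n.
Proof. by rewrite /ngens /gens size_map -cardE. Qed.

Lemma mem_gens n s : (s \in gens n) = gen d n l s.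
Proof.
apply/mapP/idP => [[u]|gen_s]; first by rewrite mem_enum inE => + ->.
have size_s : size s == n.+1 by case/and3P: gen_s.
by exists (Tuple size_s); rewrite // mem_enum inE.
Qed.

Lemma gen_at_gen n (i : 'I_(ngens n)) : gen d n l (gen_at i).
Proof. by rewrite -mem_gens mem_nth. Qed.

Lemma eq_gen_at n (i j : 'I_(ngens n)) : (gen_at i == gen_at j) = (i == j).
Proof. by rewrite nth_uniq // map_inj_uniq ?enum_uniq //; apply: val_inj. Qed.

Lemma gen_atP n s : gen d n l s -> exists i : 'I_(ngens n), gen_at i = s.
Proof.
rewrite -mem_gens => gen_s; exists (Ordinal (etrans (index_mem _ _) gen_s)).
exact: nth_index.
Qed.

Lemma sum_tuples_supported n (c F : chain T) : supported d n l c ->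
  \sum_(t : (n.+1).-tuple T) c t * F t =
  \sum_(i < ngens n) c (gen_at i) * F (gen_at i).
Proof.
move=> supp_c.
rewrite (bigID (mem [set u : (n.+1).-tuple T | gen d n l (val u)])) /=.
rewrite [X in _ + X]big1 ?addr0 => [|u]; last first.
  rewrite inE => /negbTE gen_u.
  by case: (c u =P 0) => [->|/eqP /supp_c]; rewrite ?mul0r ?gen_u.
rewrite -big_enum -(big_map val xpredT (fun s => c s * F s)).
by rewrite (big_nth [::]) big_mkord.
Qed.

Definition coords n (c : chain T) : 'rV[rat]_(ngens n) :=
  \row_i (c (gen_at i))%:~R.

Definition coordsmx n k (v : 'I_k -> chain T) : 'M[rat]_(k, ngens n) :=
  \matrix_i coords n (v i).

Definition face_sum n t s : int :=
  \sum_(i < n.+2) (-1) ^+ i * face_coef d i t s.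

Definition bdmx n : 'M[rat]_(ngens n.+1, ngens n) :=
  \matrix_(i, j) (face_sum n (gen_at i) (gen_at j))%:~R.

Lemma supported0 n : supported d n l (fun _ => 0).
Proof. by move=> s; rewrite eqxx. Qed.

Lemma supported_bd n b : supported d n.+1 l b -> supported d n l (bd d n b).
Proof.
move=> supp_b s; apply: contraR => gen_s; apply/eqP; apply: big1 => t _.
case: (b t =P 0) => [->|/eqP /supp_b gen_t]; first by rewrite mul0r.
rewrite big1 ?mulr0 // => i _.
case: (face_coef d i t s =P 0) => [->|/eqP]; first by rewrite mulr0.
by move/(gen_face (ltn_ord i) gen_t); rewrite (negbTE gen_s).
Qed.

Lemma supported_lincomb n k (a : 'I_k -> int) v :
  (forall i, supported d n l (v i)) -> supported d n l (lincomb a v).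
Proof.
move=> supp_v s; apply: contraR => gen_s; apply/eqP; apply: big1 => i _.
case: (v i s =P 0) => [->|/eqP /supp_v]; first by rewrite mulr0.
by rewrite (negbTE gen_s).
Qed.

Lemma coords_bd n b : supported d n.+1 l b ->
  coords n (bd d n b) = coords n.+1 b *m bdmx n.
Proof.
move=> supp_b; apply/rowP => j; rewrite !mxE.
rewrite /bd (sum_tuples_supported (fun t => face_sum n t (gen_at j)) supp_b).
by rewrite rmorph_sum; apply: eq_bigr => i _; rewrite !mxE rmorphM.
Qed.

Lemma coords_lincomb n k (a : 'I_k -> int) v :
  coords n (lincomb a v) = \row_i (a i)%:~R *m coordsmx n v.
Proof.
apply/rowP => j; rewrite !mxE rmorph_sum; apply: eq_bigr => i _.
by rewrite !mxE rmorphM.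
Qed.

Lemma coords_inj n c1 c2 : supported d n l c1 -> supported d n l c2 ->
  coords n c1 = coords n c2 -> c1 =1 c2.
Proof.
move=> supp1 supp2 eq_c s.
case: (boolP (gen d n l s)) => [/gen_atP[i <-]|gen_s].
  by apply: (@intr_inj rat); have /rowP/(_ i) := eq_c; rewrite !mxE.
case: (c1 s =P 0) => [->|/eqP /supp1]; last by rewrite (negbTE gen_s).
by case: (c2 s =P 0) => [->|/eqP /supp2] //; rewrite (negbTE gen_s).
Qed.

Definition chain_of_row n (w : 'rV[rat]_(ngens n)) : chain T := fun s =>
  \sum_(i < ngens n) (if gen_at i == s then Num.floor (w 0 i) else 0).

Lemma supported_chain_of_row n (w : 'rV[rat]_(ngens n)) :
  supported d n l (@chain_of_row n w).
Proof.
move=> s; apply: contraR => gen_s; apply/eqP; apply: big1 => i _.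
by case: eqP => // eq_s; move: gen_s; rewrite -eq_s gen_at_gen.
Qed.

Lemma coords_chain_of_row n (w : 'rV[rat]_(ngens n)) :
  (forall j, w 0 j \is a Num.int) ->
  coords n (@chain_of_row n w) = w.
Proof.
move=> w_int; apply/rowP => j; rewrite mxE /chain_of_row (bigD1 j) //= eqxx.
rewrite big1 ?addr0 ?floorK // => i ij.
by rewrite eq_gen_at (negbTE ij).
Qed.

Lemma sum_faces n t (G : seq T -> int) : gen d n.+2 l t ->
  \sum_(j < ngens n.+1) face_sum n.+1 t (gen_at j) * G (gen_at j) =
  \sum_(p < n.+3) (-1) ^+ p *
     (if tlen d (rem_at p t) == tlen d t then G (rem_at p t) else 0).
Proof.
move=> gen_t; under eq_bigr => j _ do rewrite mulr_suml.
rewrite exchange_big /=; apply: eq_bigr => p _.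
case: ifP => [len_eq|len_neq]; last first.
  rewrite mulr0 big1 // => j _; rewrite /face_coef.
  by case: ifP => [/andP[/eqP <-]|]; rewrite ?len_neq ?mulr0 ?mul0r.
have [|j eq_j] := @gen_atP n.+1 (rem_at p t).
  by apply: (gen_face (ltn_ord p) gen_t); rewrite /face_coef eqxx len_eq.
rewrite (bigD1 j) //= big1 ?addr0 => [|i ij].
  by rewrite eq_j /face_coef eqxx len_eq mulr1.
rewrite /face_coef -eq_j eq_sym eq_gen_at (negbTE ij).
by rewrite mulr0 mul0r.
Qed.

Lemma bdmxK n : bdmx n.+1 *m bdmx n = 0.
Proof.
apply/matrixP => i k; rewrite !mxE.
set t := gen_at i; set s := gen_at k.
have -> : \sum_j bdmx n.+1 i j * bdmx n j k =
    (\sum_(j < ngens n.+1)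
       face_sum n.+1 t (gen_at j) * face_sum n (gen_at j) s)%:~R.
  by rewrite rmorph_sum; apply: eq_bigr => j _; rewrite !mxE rmorphM.
rewrite (sum_faces (face_sum n ^~ s) (gen_at_gen i)).
pose H w : int := if (w == s) && (tlen d w == tlen d t) then 1 else 0.
apply/eqP; rewrite intr_eq0; apply/eqP.
rewrite -[RHS](alternating_rem_at_sum_eq0 H (n.+2) t).
apply: eq_bigr => p _; rewrite /face_sum.
case: ifP => [len_eq|len_neq].
  rewrite mulr_sumr; apply: eq_bigr => q _.
  by rewrite exprD -mulrA /face_coef /H (eqP len_eq).
rewrite mulr0 big1 // => q _; rewrite /H.
suff /lt_eqF -> : tlen d (rem_at q (rem_at p t)) < tlen d t.
  by rewrite andbF mulr0.
apply: le_lt_trans (tlen_rem_at_le _ _) _.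
by rewrite lt_neqAle len_neq tlen_rem_at_le.
Qed.

Definition cyclemx n : 'M[rat]_(ngens n) :=
  match n return 'M[rat]_(ngens n) with 0 => 1%:M | m.+1 => kermx (bdmx m) end.

Lemma bdmx_sub_cyclemx n : (bdmx n <= cyclemx n)%MS.
Proof. by case: n => [|n] /=; rewrite ?submx1 // sub_kermx bdmxK. Qed.

Lemma is_cycleP n c : supported d n l c ->
  is_cycle d n l c <-> (coords n c <= cyclemx n)%MS.
Proof.
case: n c => [|n] c supp_c; first by rewrite submx1.
rewrite /= sub_kermx -coords_bd //; split => [[_ bd0]|/eqP coords0].
  by apply/eqP/rowP => j; rewrite !mxE bd0.
split=> // s; apply: (coords_inj (supported_bd supp_c) (@supported0 n)).
by rewrite coords0; apply/rowP => j; rewrite !mxE.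
Qed.

Lemma is_boundary_coords n c : is_boundary d n l c -> (coords n c <= bdmx n)%MS.
Proof.
case=> b [supp_b c_bd].
have -> : coords n c = coords n (bd d n b).
  by apply/rowP => j; rewrite !mxE c_bd.
by rewrite coords_bd // submxMl.
Qed.

(* Rational boundaries need not be integral ones, hence the multiple [N]. *)
Lemma coords_is_boundary n c : supported d n l c -> (coords n c <= bdmx n)%MS ->
  exists2 N : nat, (0 < N)%N & is_boundary d n l (fun s => N%:Z * c s).
Proof.
move=> supp_c /submxP[x coords_c].
have [N N_gt0 Nx_int] := common_denominator_mx x.
have supp_b := supported_chain_of_row (w := N%:R *: x).
exists N => //; exists (chain_of_row (N%:R *: x)); split=> //.
apply: (@coords_inj n).
- by move=> s; rewrite mulf_eq0 negb_or => /andP[_ /supp_c].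
- exact: supported_bd.
rewrite coords_bd // coords_chain_of_row => [|j]; last by rewrite mxE.
by rewrite -scalemxAl -coords_c; apply/rowP => j; rewrite !mxE rmorphM.
Qed.

Lemma HM_indep_coords n k (v : 'I_k -> chain T) :
  (forall i, supported d n l (v i)) ->
  (forall a, is_boundary d n l (lincomb a v) -> forall i, a i = 0) ->
  forall a : 'rV[rat]_k, (a *m coordsmx n v <= bdmx n)%MS -> a = 0.
Proof.
move=> supp_v indep a bd_a.
have [N N_gt0 Na_int] := common_denominator_mx a.
pose b i := Num.floor (N%:R * a 0 i).
have coords_b : coords n (lincomb b v) = (N%:R *: a) *m coordsmx n v.
  rewrite coords_lincomb; congr (_ *m _).
  by apply/rowP => i; rewrite !mxE floorK.
have [|N' N'_gt0 bd_b] :=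
  coords_is_boundary (supported_lincomb (a := b) supp_v).
  by rewrite coords_b -scalemxAl scalemx_sub.
have /indep b0 : is_boundary d n l (lincomb (fun i => N'%:Z * b i) v).
  congr (is_boundary _ _ _ _): bd_b; apply: funext => s.
  by rewrite /lincomb mulr_sumr; apply: eq_bigr => i _; rewrite mulrA.
apply/rowP => i; have /eqP := b0 i.
rewrite mulf_eq0 -/(Posz 0) eqz_nat eqn0Ngt N'_gt0 /= => /eqP b0i.
have /eqP : N%:R * a 0 i = 0 by rewrite -(floorK (Na_int 0 i)) -/(b i) b0i.
by rewrite mulf_eq0 pnatr_eq0 eqn0Ngt N_gt0 mxE => /eqP.
Qed.

Lemma HM_indep_leq n k : HM_indep d n l k ->
  (k + \rank (bdmx n) <= \rank (cyclemx n))%N.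
Proof.
case=> v [cycle_v indep]; set W := coordsmx n v.
have supp_v i : supported d n l (v i) by case: (cycle_v i).
have W_indep := HM_indep_coords supp_v indep.
have free_W : row_free W.
  rewrite -kermx_eq0; apply/eqP/row_matrixP => i; rewrite row0.
  by apply: W_indep; rewrite -row_mul mulmx_ker row0 sub0mx.
have W_cap : (W :&: bdmx n)%MS = 0.
  apply/row_matrixP => i; rewrite row0.
  have := row_sub i (W :&: bdmx n)%MS.
  rewrite sub_capmx => /andP[/submxP[a ->]].
  by move/W_indep ->; rewrite mul0mx.
have W_sub : (W <= cyclemx n)%MS.
  by apply/row_subP => i; rewrite rowK -is_cycleP.
rewrite -(eqP free_W) -mxrank_disjoint_sum //; apply: mxrankS.
by rewrite addsmx_sub W_sub bdmx_sub_cyclemx.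
Qed.

Lemma HM_indep_homology n : HM_indep d n l (\rank (cyclemx n :\: bdmx n)).
Proof.
set H := (cyclemx n :\: bdmx n)%MS.
have [N N_gt0 N_int] := common_denominator_mx (row_base H).
set W := N%:R *: row_base H.
have W_sub : (W <= H)%MS by rewrite scalemx_sub // eq_row_base.
pose v i := chain_of_row (row i W).
have W_coords : coordsmx n v = W.
  apply/row_matrixP => i; rewrite rowK coords_chain_of_row // => j.
  by rewrite mxE /W mxE N_int.
exists v; split=> [i|a /is_boundary_coords].
  apply/is_cycleP; first exact: supported_chain_of_row.
  have -> : coords n (v i) = row i W by rewrite -W_coords rowK.
  exact: submx_trans (row_sub _ _) (submx_trans W_sub (diffmxSl _ _)).
rewrite coords_lincomb W_coords => bd_aW.
have : (\row_i (a i)%:~R *m W <= H :&: bdmx n)%MS.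
  by rewrite sub_capmx bd_aW (submx_trans (submxMl _ _) W_sub).
rewrite capmx_diff submx0 -scalemxAr scaler_eq0 pnatr_eq0 eqn0Ngt N_gt0 /=.
rewrite -(mul0mx _ (row_base H)) => /eqP /(row_free_inj (row_base_free H)).
move=> /rowP a0 i.
by have /eqP := a0 i; rewrite !mxE intr_eq0 => /eqP.
Qed.

Lemma rank_homology n :
  (\rank (cyclemx n :\: bdmx n) + \rank (bdmx n))%N = \rank (cyclemx n).
Proof.
have /capmx_idPr capD := bdmx_sub_cyclemx n.
rewrite -mxrank_disjoint_sum ?capmx_diff //; apply/eqmx_rank/eqmxP.
exact: eqmx_trans (adds_eqmx (eqmx_refl _) (eqmx_sym capD))
  (addsmx_diff_cap_eq _ _).
Qed.

Lemma rkHM_rank n : rkHM d n l = \rank (cyclemx n :\: bdmx n).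
Proof.
have rank_lt : (\rank (cyclemx n :\: bdmx n) < (#|T| ^ n.+1).+1)%N.
  rewrite ltnS (leq_trans (rank_leq_col _)) // -rkC_ngens -card_tuple.
  exact: max_card.
apply/eqP; rewrite eqn_leq; apply/andP; split.
  apply/bigmax_leqP => k /asboolP /HM_indep_leq.
  by rewrite -rank_homology leq_add2r.
apply: (@leq_bigmax_cond _ _ (fun k : 'I_(#|T| ^ n.+1).+1 => nat_of_ord k)
  (Ordinal rank_lt)).
exact/asboolP/HM_indep_homology.
Qed.

Lemma rkC0_rank : rkC d 0 l = \rank (cyclemx 0).
Proof. by rewrite rkC_ngens /= mxrank1. Qed.

Lemma rkCS_rank n : rkC d n.+1 l = (\rank (cyclemx n.+1) + \rank (bdmx n))%N.
Proof. by rewrite rkC_ngens /= mxrank_ker subnK // rank_leq_row. Qed.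

Lemma rank_bdmx_eq0 n : rkC d n.+1 l = 0%N -> \rank (bdmx n) = 0%N.
Proof.
by rewrite rkC_ngens => rk0; apply/eqP; rewrite -leqn0 -rk0 rank_leq_row.
Qed.

End Grading.
End QuasiMetric.

Lemma chi_nerve_trunc (R : realType) (T : finType) (d : T -> T -> R) l M :
  (forall n, (M <= n)%N -> rkC d n l = 0%N) ->
  chi_nerve d l = \sum_(n < M) (-1) ^+ n * (rkC d n l)%:R.
Proof.
move=> rkC0; rewrite /chi_nerve -(fsbig_widen `I_M) //.
  by rewrite (fsbig_ord _ _ (fun n => (-1) ^+ n * (rkC d n l)%:R)).
by move=> n [_ /negP]; rewrite /= -leqNgt => /rkC0 ->; rewrite mulr0.
Qed.

Lemma rkC_large_degree (R : realType) (T : finType) (d : T -> T -> R) L :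
  quasi_metric d ->
  exists N, forall n l, (N <= n)%N -> l < L -> rkC d n l = 0%N.
Proof.
move=> qm; have [N no_gen] := gen_large_degree qm L.
exists N => n l le_Nn lt_lL; apply/eqP; rewrite cards_eq0; apply/eqP/setP => u.
by rewrite !inE (negbTE (no_gen _ _ _ le_Nn lt_lL)).
Qed.

Theorem theorem5p9 (R : realType) (T : finType) (d : T -> T -> R) :
  quasi_metric d ->
  hahn_series_converges_to
    (fun n : nat => fun l : R => (-1) ^+ n * rk_HM_series d n l)
    (chi_nerve d).
Proof.
move=> qm L; have [N rkC0] := rkC_large_degree L qm.
exists N.+1 => -[//|M] le_NM l lt_lL.
have rkC_gt n : (M.+1 <= n)%N -> rkC d n l = 0%N.
  by move=> le_Mn; apply: rkC0 lt_lL; apply: leq_trans (ltnW le_NM) le_Mn.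
rewrite (chi_nerve_trunc rkC_gt).
have rkHM_bd n : (rkHM d n l + \rank (bdmx d l n))%N = \rank (cyclemx d l n).
  by rewrite (rkHM_rank qm) rank_homology.
rewrite -(euler_char_telescope (c := rkC d ^~ l) rkHM_bd (rkC0_rank d l)
  (rkCS_rank d l)).
by rewrite rank_bdmx_eq0 ?rkC_gt // mulr0 addr0.
Qed.
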